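(* Fix a slot $t$ and arbitrary values $W(t)\in[0,W_{max}]$, $S(t)\in\mathcal{S}$ and $X(t)\in\mathbb{R}$, and a parameter $V>0$. Consider problem P3 for this slot, with decision variable $P\in[P_{low},P_{high}]$, where $P_{low}=\max[0,W(t)-D_{max}]$, $P_{high}=\min[P_{peak},W(t)+R_{max}]$, and the induced $R=\max(P-W(t),0)$, $D=\max(W(t)-P,0)$. Then every optimal solution $P^*(t)$ of P3 (with induced $R^*(t),D^*(t)$) satisfies: (1) if $X(t)>-V C_{min}$, then $R^*(t)=0$ (i.e. $P^*(t)\le W(t)$); (2) if $X(t)<-V\chi_{min}$, then $D^*(t)=0$ (i.e. $P^*(t)\ge W(t)$).
   Context: Basic model. Time is slotted, $t=0,1,2,\dots$. In slot $t$ the workload (in units of power) is $W(t)\in[0,W_{max}]$. A controller chooses the grid power $P(t)$, the battery recharge amount $R(t)$ and the battery discharge amount $D(t)$ subject to: $W(t)=P(t)-R(t)+D(t)$; $R(t)>0\Rightarrow D(t)=0$ and $D(t)>0\Rightarrow R(t)=0$; $0\le R(t)\le R_{max}$, $0\le D(t)\le D_{max}$; $0\le P(t)\le P_{peak}$, where $P_{peak}\ge W_{max}$. An auxiliary state $S(t)$ takes values in a finite set $\mathcal{S}$. The per-unit price is $C(t)=\hat C(S(t),P(t))$, where for each $s\in\mathcal{S}$ the map $P\mapsto\hat C(s,P)$ is non-negative, finite and non-decreasing on $[0,P_{peak}]$ (not necessarily continuous or convex). $C_{min}$ and $C_{max}$ denote the minimum and maximum of $\hat C(s,P)$ over $s\in\mathcal{S}$,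 $P\in[0,P_{peak}]$. Constants $C_{rc}\ge0$, $C_{dc}\ge0$ are the fixed costs of a recharge and a discharge operation. Indicators: $1_R(t)=1$ if $R(t)>0$ and $0$ otherwise; $1_D(t)=1$ if $D(t)>0$ and $0$ otherwise. The constant $\chi_{min}>0$ is such that for all $P_1\le P_2$ in $[0,P_{peak}]$, all $\chi\ge\chi_{min}$ and all $s\in\mathcal{S}$: $P_1(-\chi+\hat C(s,P_1))\ge P_2(-\chi+\hat C(s,P_2))$; it is assumed that $\chi_{min}>C_{min}$. Problem P3 (for slot $t$, given $W(t),S(t),X(t)$ and $V>0$): minimize $X(t)P+V\big[P\,\hat C(S(t),P)+1_R C_{rc}+1_D C_{dc}\big]$ over $P\in[P_{low},P_{high}]$, where $R=\max(P-W(t),0)$, $D=\max(W(t)-P,0)$, $1_R=1$ iff $P>W(t)$, $1_D=1$ iff $P<W(t)$. *)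

From Stdlib Require Import Reals Lra List.
Open Scope R_scope.

(* Indicator 1_R : 1 iff R > 0, i.e. P > W; 1_D : 1 iff D > 0, i.e. P < W. *)
Definition ind_R (W P : R) : R := if Rlt_dec W P then 1 else 0.
Definition ind_D (W P : R) : R := if Rlt_dec P W then 1 else 0.

Definition P3_obj {S : Type} (Chat : S -> R -> R) (Crc Cdc V X W : R) (s : S)
  (P : R) : R :=
  X * P + V * (P * Chat s P + ind_R W P * Crc + ind_D W P * Cdc).

Definition P_low (W Dmax : R) : R := Rmax 0 (W - Dmax).
Definition P_high (W Ppeak Rmax_ : R) : R := Rmin Ppeak (W + Rmax_).

Definition P3_optimal {S : Type} (Chat : S -> R -> R)
  (Crc Cdc V X W Ppeak Rmax_ Dmax : R) (s : S) (Pstar : R) : Prop :=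
  P_low W Dmax <= Pstar <= P_high W Ppeak Rmax_ /\
  forall P, P_low W Dmax <= P <= P_high W Ppeak Rmax_ ->
    P3_obj Chat Crc Cdc V X W s Pstar <= P3_obj Chat Crc Cdc V X W s P.

(* The load itself, P = W, is always feasible and incurs no fixed recharge or
   discharge cost, so an optimum can never be strictly worse than it.  Above
   the load, every extra unit of grid power costs at least X + V Cmin, which is
   positive under (1); below the load, the chimin-monotonicity of P Chat(s,P)
   shows that every unit of discharge costs at least -X - V chimin, which is
   positive under (2).  Hence P* = W beats any P on the wrong side of W. *)
From Stdlib Require Import Reals Lra List.
Open Scope R_scope.

Section P3.

Variables (S : Type) (Chat : S -> R -> R) (Crc Cdc V X W : R) (s : S).

Local Notation obj := (P3_obj Chat Crc Cdc V X W s).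

Lemma P3_obj_load : obj W = X * W + V * (W * Chat s W).
Proof.
  unfold P3_obj, ind_R, ind_D.
  destruct (Rlt_dec W W); [lra|]; ring.
Qed.

Lemma P3_obj_above_load P : W < P ->
  obj P = X * P + V * (P * Chat s P + Crc).
Proof.
  intro HWP; unfold P3_obj, ind_R, ind_D.
  destruct (Rlt_dec W P); [|lra].
  destruct (Rlt_dec P W); [lra|]; ring.
Qed.

Lemma P3_obj_below_load P : P < W ->
  obj P = X * P + V * (P * Chat s P + Cdc).
Proof.
  intro HPW; unfold P3_obj, ind_R, ind_D.
  destruct (Rlt_dec W P); [lra|].
  destruct (Rlt_dec P W); [|lra]; ring.
Qed.

Hypothesis HV : 0 < V.

Lemma P3_obj_load_lt_above (Cmin P : R) :
  0 <= W -> W < P -> 0 <= Crc ->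
  Chat s W <= Chat s P -> Cmin <= Chat s P ->
  X > - V * Cmin -> obj W < obj P.
Proof.
  intros HW HWP HCrc Hmono HCmin HX.
  rewrite P3_obj_load, P3_obj_above_load by exact HWP.
  (* P Chat(P) - W Chat(W) >= (P - W) Chat(P) >= (P - W) Cmin *)
  assert (Hcost : (P - W) * Cmin <= P * Chat s P - W * Chat s W).
  { assert (0 <= W * (Chat s P - Chat s W)) by (apply Rmult_le_pos; lra).
    assert ((P - W) * Cmin <= (P - W) * Chat s P)
      by (apply Rmult_le_compat_l; lra).
    lra. }
  assert (0 < (P - W) * (X + V * Cmin)) by (apply Rmult_lt_0_compat; lra).
  assert (V * ((P - W) * Cmin) <= V * (P * Chat s P - W * Chat s W))
    by (apply Rmult_le_compat_l; lra).
  assert (0 <= V * Crc) by (apply Rmult_le_pos; lra).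
  nra.
Qed.

Lemma P3_obj_load_lt_below (chi P : R) :
  P < W -> 0 <= Cdc ->
  P * (- chi + Chat s P) >= W * (- chi + Chat s W) ->
  X < - V * chi -> obj W < obj P.
Proof.
  intros HPW HCdc Hchi HX.
  rewrite P3_obj_load, P3_obj_below_load by exact HPW.
  assert (0 < (W - P) * (- X - V * chi)) by (apply Rmult_lt_0_compat; lra).
  assert (V * (chi * (P - W)) <= V * (P * Chat s P - W * Chat s W))
    by (apply Rmult_le_compat_l; lra).
  assert (0 <= V * Cdc) by (apply Rmult_le_pos; lra).
  nra.
Qed.

End P3.

Lemma load_feasible (W Ppeak Rmax_ Dmax : R) :
  0 <= Rmax_ -> 0 <= Dmax -> 0 <= W <= Ppeak ->
  P_low W Dmax <= W <= P_high W Ppeak Rmax_.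
Proof.
  intros; unfold P_low, P_high; split.
  - apply Rmax_lub; lra.
  - apply Rmin_glb; lra.
Qed.

Lemma P3_feasible_range (W Ppeak Rmax_ Dmax P : R) :
  P_low W Dmax <= P <= P_high W Ppeak Rmax_ -> 0 <= P <= Ppeak.
Proof.
  unfold P_low, P_high; intros [Hlo Hhi]; split.
  - exact (Rle_trans _ _ _ (Rmax_l _ _) Hlo).
  - exact (Rle_trans _ _ _ Hhi (Rmin_l _ _)).
Qed.

Theorem lemma2
  (S : Type) (Sfin : exists l : list S, forall s : S, In s l)
  (Chat : S -> R -> R)
  (Wmax Ppeak Rmax_ Dmax Crc Cdc Cmin Cmax chimin : R)
  (HRmax : 0 <= Rmax_) (HDmax : 0 <= Dmax)
  (HPpeak : Wmax <= Ppeak) (HWmax : 0 <= Wmax)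
  (HCrc : 0 <= Crc) (HCdc : 0 <= Cdc)
  (HCnonneg : forall s P, 0 <= P <= Ppeak -> 0 <= Chat s P)
  (HCmono : forall s P1 P2, 0 <= P1 -> P1 <= P2 -> P2 <= Ppeak ->
              Chat s P1 <= Chat s P2)
  (HCmin_lb : forall s P, 0 <= P <= Ppeak -> Cmin <= Chat s P)
  (HCmin_att : exists s P, 0 <= P <= Ppeak /\ Chat s P = Cmin)
  (HCmax_ub : forall s P, 0 <= P <= Ppeak -> Chat s P <= Cmax)
  (HCmax_att : exists s P, 0 <= P <= Ppeak /\ Chat s P = Cmax)
  (Hchi_pos : 0 < chimin)
  (Hchi : forall P1 P2 chi s, 0 <= P1 -> P1 <= P2 -> P2 <= Ppeak ->
            chi >= chimin ->
            P1 * (- chi + Chat s P1) >= P2 * (- chi + Chat s P2))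
  (Hchi_Cmin : chimin > Cmin)
  (W X V : R) (s : S)
  (HW : 0 <= W <= Wmax) (HV : 0 < V)
  (Pstar : R)
  (Hopt : P3_optimal Chat Crc Cdc V X W Ppeak Rmax_ Dmax s Pstar) :
  (X > - V * Cmin -> Rmax (Pstar - W) 0 = 0) /\
  (X < - V * chimin -> Rmax (W - Pstar) 0 = 0).
Proof.
  destruct Hopt as [Hfeas Hmin].
  pose proof (P3_feasible_range _ _ _ _ _ Hfeas) as HP.
  assert (Hload : P3_obj Chat Crc Cdc V X W s Pstar <=
                  P3_obj Chat Crc Cdc V X W s W)
    by (apply Hmin, load_feasible; lra).
  split; intro HX; apply Rmax_right.
  - destruct (Rle_dec Pstar W) as [|HWP]; [lra|exfalso].
    apply Rnot_le_lt in HWP.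
    assert (Hmono : Chat s W <= Chat s Pstar) by (apply HCmono; lra).
    apply (Rle_not_lt _ _ Hload).
    exact (P3_obj_load_lt_above S Chat Crc Cdc V X W s HV
             Cmin Pstar (proj1 HW) HWP HCrc Hmono (HCmin_lb _ _ HP) HX).
  - destruct (Rle_dec W Pstar) as [|HPW]; [lra|exfalso].
    apply Rnot_le_lt in HPW.
    assert (Hcost := Hchi Pstar W chimin s ltac:(lra) ltac:(lra) ltac:(lra)
                          ltac:(lra)).
    apply (Rle_not_lt _ _ Hload).
    exact (P3_obj_load_lt_below S Chat Crc Cdc V X W s HV
             chimin Pstar HPW HCdc Hcost HX).
Qed.
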